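(* If $v_{j1}^2+v_{j2}^2\neq0$ for $j=1$ or for $j=2$, then none of the points $[1,1,\sqrt{-1}]$, $[1,1,-\sqrt{-1}]$, $[1,-1,\sqrt{-1}]$, $[1,-1,-\sqrt{-1}]$ is a singular point of $V(\mathbf v,d)$.
   Context: Parameters $[\mathbf v,d]=[v_{11},v_{12},v_{21},v_{22},d]\in\mathbb{C}P^4$ (complex, not all zero). On $\mathbb{C}P^2$ with coordinates $[u_0,u_1,u_2]$, $V(\mathbf v,d)$ is the plane quartic $P=0$ where $P=2v_{22}u_0u_2(u_1^2+u_2^2)-2v_{12}u_1u_2(u_0^2+u_2^2)+v_{21}(u_2^2-u_0^2)(u_2^2+u_1^2)-v_{11}(u_2^2-u_1^2)(u_0^2+u_2^2)-d(u_1^2+u_2^2)(u_0^2+u_2^2)$. A point of $V$ is singular if all partial derivatives of $P$ vanish there. *)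

From HB Require Import structures.
From mathcomp Require Import all_boot all_order all_algebra.
From mathcomp Require Import mpoly.
Set Implicit Arguments. Unset Strict Implicit. Unset Printing Implicit Defensive.
Import Order.TTheory GRing.Theory Num.Theory.
Local Open Scope ring_scope.

(* Coordinates [u0,u1,u2] of CP^2 are the variables 'X_0, 'X_1, 'X_2 of
   {mpoly C[3]}. C is any numeric algebraically closed field (e.g. the complex
   numbers), 'i denotes sqrt(-1). *)

Definition u0 {C : numClosedFieldType} : {mpoly C[3]} := 'X_(0 : 'I_3).
Definition u1 {C : numClosedFieldType} : {mpoly C[3]} := 'X_(1 : 'I_3).
Definition u2 {C : numClosedFieldType} : {mpoly C[3]} := 'X_(2 : 'I_3).

Definition quarticP (C : numClosedFieldType) (v11 v12 v21 v22 d : C)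
  : {mpoly C[3]} :=
  (2 * v22)%:MP * u0 * u2 * (u1 ^+ 2 + u2 ^+ 2)
  - (2 * v12)%:MP * u1 * u2 * (u0 ^+ 2 + u2 ^+ 2)
  + v21%:MP * (u2 ^+ 2 - u0 ^+ 2) * (u2 ^+ 2 + u1 ^+ 2)
  - v11%:MP * (u2 ^+ 2 - u1 ^+ 2) * (u0 ^+ 2 + u2 ^+ 2)
  - d%:MP * (u1 ^+ 2 + u2 ^+ 2) * (u0 ^+ 2 + u2 ^+ 2).

Definition singular_point (C : numClosedFieldType) (p : {mpoly C[3]})
  (x : 'I_3 -> C) : Prop :=
  forall i : 'I_3, (mderiv i p).@[x] = 0.

Definition hpt (C : numClosedFieldType) (a b c : C) : 'I_3 -> C :=
  fun i => if val i == 0%N then a else if val i == 1%N then b else c.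

From HB Require Import structures.
From mathcomp Require Import all_boot all_order all_algebra.
From mathcomp Require Import mpoly.
From mathcomp Require Import ring.
Set Implicit Arguments. Unset Strict Implicit. Unset Printing Implicit Defensive.
Import Order.TTheory GRing.Theory Num.Theory.
Local Open Scope ring_scope.

(* Write P = F A + G B - d A B with A = u1^2 + u2^2, B = u0^2 + u2^2,
   F = 2 v22 u0 u2 + v21 (u2^2 - u0^2) and G = -2 v12 u1 u2 - v11 (u2^2 - u1^2).
   The four points [1, s, t] with s^2 = 1, t^2 = -1 are the common zeros of A
   and B, so there the gradient of P is F grad A + G grad B.  Since A does not
   involve u0 and B does not involve u1, the partial derivatives in u0 and u1
   give G = 0 and F = 0, i.e. v11 = v12 s t and v21 = v22 t; squaring, both
   v11^2 + v12^2 and v21^2 + v22^2 vanish. *)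

Lemma meval_mderivX (R : comNzRingType) (n : nat) (i j : 'I_n) (x : 'I_n -> R) :
  (mderiv j ('X_i : {mpoly R[n]})).@[x] = (i == j)%:R.
Proof.
rewrite mderivX mevalZ mevalX mnm1E.
have [->|_] := eqVneq i j; last by rewrite mul0r.
by rewrite mul1r big1 // => k _; rewrite mnmBE subnn expr0.
Qed.

Lemma meval_mderiv_at_common_zero (R : comNzRingType) (n : nat)
    (F G E A B : {mpoly R[n]}) (i : 'I_n) (x : 'I_n -> R) :
  A.@[x] = 0 -> B.@[x] = 0 ->
  (mderiv i (F * A + G * B - E * A * B)).@[x] =
  F.@[x] * (mderiv i A).@[x] + G.@[x] * (mderiv i B).@[x].
Proof.
move=> A0 B0.
by rewrite !(mderivB, mderivD, mderivM, mevalB, mevalD, mevalM) A0 B0; ring.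
Qed.

Section IsotropicPoints.

Variables (C : numClosedFieldType) (v11 v12 v21 v22 d s t : C).

Lemma quarticP_decomp :
  quarticP v11 v12 v21 v22 d =
  ((2 * v22)%:MP * u0 * u2 + v21%:MP * (u2 ^+ 2 - u0 ^+ 2)) * (u1 ^+ 2 + u2 ^+ 2)
  + (- (2 * v12)%:MP * u1 * u2 - v11%:MP * (u2 ^+ 2 - u1 ^+ 2)) * (u0 ^+ 2 + u2 ^+ 2)
  - d%:MP * (u1 ^+ 2 + u2 ^+ 2) * (u0 ^+ 2 + u2 ^+ 2).
Proof. by rewrite /quarticP; ring. Qed.

Hypotheses (s2 : s ^+ 2 = 1) (t2 : t ^+ 2 = -1).

Lemma meval_u1u2_isotropic : (u1 ^+ 2 + u2 ^+ 2 : {mpoly C[3]}).@[hpt 1 s t] = 0.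
Proof. by rewrite mevalD !rmorphXn /= !mevalXU /= s2 t2 subrr. Qed.

Lemma meval_u0u2_isotropic : (u0 ^+ 2 + u2 ^+ 2 : {mpoly C[3]}).@[hpt 1 s t] = 0.
Proof. by rewrite mevalD !rmorphXn /= !mevalXU /= t2 expr1n subrr. Qed.

Lemma singular_isotropic_point :
  singular_point (quarticP v11 v12 v21 v22 d) (hpt 1 s t) ->
  v11 = v12 * s * t /\ v21 = v22 * t.
Proof.
move=> sing.
have := sing 0; have := sing 1.
rewrite quarticP_decomp !meval_mderiv_at_common_zero ?meval_u1u2_isotropic
  ?meval_u0u2_isotropic //.
rewrite /u0 /u1 /u2 !expr2 !(mderivD, mderivM, mderivB, mderivN, mderivC,
  mevalD, mevalM, mevalB, mevalN, meval_mderivX, mevalC, mevalXU) /= /hpt /=.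
rewrite -[t * t]expr2 -[s * s]expr2 s2 t2 => dP1 dP0.
have s_neq0 : s != 0 by apply: contra_eq_neq s2 => ->; rewrite expr0n eq_sym oner_eq0.
have four_neq0 : (4 : C) != 0 by rewrite pnatr_eq0.
have /eqP : 4 * (v11 - v12 * s * t) = 0 by rewrite -dP0; ring.
have /eqP : 4 * s * (v22 * t - v21) = 0 by rewrite -dP1; ring.
by rewrite !mulf_eq0 (negPf four_neq0) (negPf s_neq0) !subr_eq0 => /eqP <- /eqP ->.
Qed.

Lemma singular_isotropic_point_sqr_sums :
  singular_point (quarticP v11 v12 v21 v22 d) (hpt 1 s t) ->
  v11 ^+ 2 + v12 ^+ 2 = 0 /\ v21 ^+ 2 + v22 ^+ 2 = 0.
Proof.
move=> /singular_isotropic_point [-> ->].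
by rewrite !exprMn s2 t2; split; ring.
Qed.

End IsotropicPoints.

Theorem lemma6p6 (C : numClosedFieldType) (v11 v12 v21 v22 d : C) :
  (v11 ^+ 2 + v12 ^+ 2 != 0) \/ (v21 ^+ 2 + v22 ^+ 2 != 0) ->
  let V := quarticP v11 v12 v21 v22 d in
  [/\ ~ singular_point V (hpt 1 1 'i),
       ~ singular_point V (hpt 1 1 (- 'i)),
       ~ singular_point V (hpt 1 (-1) 'i)
     & ~ singular_point V (hpt 1 (-1) (- 'i))].
Proof.
move=> v_neq0 V.
have nonsingular s t : s ^+ 2 = 1 -> t ^+ 2 = -1 -> ~ singular_point V (hpt 1 s t).
  move=> s2 t2 /(singular_isotropic_point_sqr_sums s2 t2) [sum1 sum2].
  by case: v_neq0; rewrite ?sum1 ?sum2 eqxx.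
have sqrCNi : (- 'i : C) ^+ 2 = -1 by rewrite sqrrN sqrCi.
by split; apply: nonsingular; rewrite ?sqrCi ?sqrCNi ?sqrrN ?expr1n.
Qed.
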